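(* Let $d$ be a positive integer, let $S\in L^2(\mathbb{H})$ be the function constructed below, let $S_j(\omega)=2^{4j}S(2^j\cdot\omega)$ and $V_j=\{f\ast S_j: f\in L^2(\mathbb{H})\}$ for $j\in\mathbb{Z}$. Suppose $\Gamma$ is a lattice in $\mathbb{H}$ and $\phi\in V_0$ is such that $\{L_\gamma\phi\}_{\gamma\in\Gamma}$ is a normalized tight frame of $V_0$. Then for every $j\in\mathbb{Z}$, the family $\{\phi_{j,\gamma}\}_{\gamma\in\Gamma}$, where $\phi_{j,\gamma}(\omega)=2^{2j}\phi\big(\gamma^{-1}(2^j\cdot\omega)\big)$, is a normalized tight frame of $V_j$.
   Context: The Heisenberg group $\mathbb{H}$ is $\mathbb{R}^3$ with product $(p_1,q_1,t_1)(p_2,q_2,t_2)=(p_1+p_2,q_1+q_2,t_1+t_2+\frac12(p_1q_2-q_1p_2))$ and Lebesgue (Haar) measure; for $a>0$, $a\cdot(p,q,t)=(ap,aq,a^2t)$ is an automorphism. Convolution: $f\ast g(\omega)=\int_{\mathbb{H}}f(\nu)g(\nu^{-1}\omega)\,d\nu$. Left translation: $L_\omega f(v)=f(\omega^{-1}v)$. A lattice is a discrete subgroup with compact quotient. A family $\{g_n\}$ in a Hilbert space $\mathcal{H}$ is a normalized tight frame of $\mathcal{H}$ if $\sum_n|\langle f,g_n\rangle|^2=\|f\|^2$ for all $f\in\mathcal{H}$. For $\lambda\neq0$, $\rho_\lambda(p,q,t)\phi(x)=e^{i\lambda t}e^{i\lambda(px+\frac12pq)}\phi(x+q)$ on $L^2(\mathbb{R})$;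 the Fourier transform $\hat f(\lambda)=\int_{\mathbb{H}}f(\omega)\rho_\lambda(\omega)d\omega$ extends by Plancherel to a unitary map from $L^2(\mathbb{H})$ onto the square-integrable measurable fields of Hilbert–Schmidt operators on $L^2(\mathbb{R})$ over $\mathbb{R}\setminus\{0\}$ with respect to $d\mu(\lambda)=(2\pi)^{-2}|\lambda|d\lambda$. Construction of $S$: fix an orthonormal basis $\{e_i\}_{i\in\mathbb{N}_0}$ of $L^2(\mathbb{R})$, put $e_i^\lambda(x)=|\lambda|^{1/4}e_i(|\lambda|^{1/2}x)$, and for $k\in\mathbb{N}_0$ let $I^k=\left[-\frac{\pi}{2^{2k+1}d},-\frac{\pi}{2^{2k+3}d}\right)\cup\left(\frac{\pi}{2^{2k+3}d},\frac{\pi}{2^{2k+1}d}\right]$. With $u\otimes u$ the operator $g\mapsto\langle g,u\rangle u$, $S$ is the unique element of $L^2(\mathbb{H})$ with $\hat S(\lambda)=\sum_{i=0}^{2^{2k}}e_i^{\lambda/2\pi}\otimes e_i^{\lambda/2\pi}$ if $\lambda\in I^k$ for some $k$, and $\hat S(\lambda)=0$ otherwise. *)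

From mathcomp Require Import all_boot all_algebra.
From mathcomp Require Import all_classical all_reals all_analysis.
From mathcomp Require Import complex.
Import GRing.Theory Num.Theory numFieldNormedType.Exports.

Set Implicit Arguments.
Unset Strict Implicit.
Unset Printing Implicit Defensive.

Local Open Scope classical_set_scope.
Local Open Scope ring_scope.

Section Heisenberg.
Variable R : realType.

Definition cR (x : R) : R[i] := Complex x 0.
Definition cexp (th : R) : R[i] := Complex (cos th) (sin th).
Definition cconj (z : R[i]) : R[i] := Complex (complex.Re z) (- complex.Im z).
Definition csq (z : R[i]) : R := complex.Re z ^+ 2 + complex.Im z ^+ 2.

Definition cint {dsp} {T : measurableType dsp} (mu : {measure set T -> \bar R})
  (f : T -> R[i]) : R[i] :=
  Complex (Rintegral mu setT (fun x => complex.Re (f x)))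
          (Rintegral mu setT (fun x => complex.Im (f x))).

Definition L2 {dsp} {T : measurableType dsp} (mu : {measure set T -> \bar R})
  (f : T -> R[i]) : Prop :=
  [/\ measurable_fun setT (fun x => complex.Re (f x)),
      measurable_fun setT (fun x => complex.Im (f x)) &
      mu.-integrable setT (fun x => (csq (f x))%:E)].

Definition ip {dsp} {T : measurableType dsp} (mu : {measure set T -> \bar R})
  (f g : T -> R[i]) : R[i] := cint mu (fun x => f x * cconj (g x)).

Definition H := (R * R * R)%type.

Definition hmul (x y : H) : H :=
  match x, y with
  | (p1, q1, t1), (p2, q2, t2) =>
      (p1 + p2, q1 + q2, t1 + t2 + 2^-1 * (p1 * q2 - q1 * p2))
  end.

Definition hinv (x : H) : H :=
  match x with (p, q, t) => (- p, - q, - t) end.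

Definition hone : H := (0, 0, 0).

Definition hdil (a : R) (x : H) : H :=
  match x with (p, q, t) => (a * p, a * q, a ^+ 2 * t) end.

(* Haar measure = Lebesgue measure on R^3 *)
Definition hmu := ((@lebesgue_measure R \x @lebesgue_measure R)
                    \x @lebesgue_measure R)%E.

Definition hconv (f g : H -> R[i]) (w : H) : R[i] :=
  cint hmu (fun v => f v * g (hmul (hinv v) w)).

Definition Ltr (w : H) (f : H -> R[i]) : H -> R[i] :=
  fun v => f (hmul (hinv w) v).

Definition Sdil (S : H -> R[i]) (j : int) : H -> R[i] :=
  fun w => cR (((2 : R) ^ j) ^+ 4) * S (hdil ((2 : R) ^ j) w).

(* V_j = { f * S_j : f in L^2(H) }, as a subset of L^2(H)
   (elements of L^2 are identified up to a.e. equality) *)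
Definition Vsp (S : H -> R[i]) (j : int) : set (H -> R[i]) :=
  [set h | L2 hmu h /\
     exists f, L2 hmu f /\ {ae hmu, forall w, h w = hconv f (Sdil S j) w}].

Definition phijg (j : int) (g : H) (phi : H -> R[i]) : H -> R[i] :=
  fun w => cR (((2 : R) ^ j) ^+ 2) * phi (hmul (hinv g) (hdil ((2 : R) ^ j) w)).

Definition NTF (V : set (H -> R[i])) (G : set H) (g : H -> (H -> R[i])) : Prop :=
  (forall gam, G gam -> V (g gam)) /\
  forall f, V f ->
    (\esum_(gam in G) (csq (ip hmu f (g gam)))%:E = (complex.Re (ip hmu f f))%:E)%E.

Definition hsubgroup (G : set H) : Prop :=
  [/\ G hone, (forall x y, G x -> G y -> G (hmul x y)) &
      (forall x, G x -> G (hinv x))].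

Definition hdiscrete (G : set H) : Prop :=
  forall x, G x -> exists2 U, nbhs (x : (R * R * R)%type) U & (forall y, U y -> G y -> y = x).

(* compact quotient Gamma \ H: some compact K with Gamma K = H *)
Definition hcocompact (G : set H) : Prop :=
  exists K : set (R * R * R)%type, compact K /\
    forall w, exists g k, [/\ G g, K k & w = hmul g k].

Definition hlattice (G : set H) : Prop :=
  [/\ hsubgroup G, hdiscrete G & hcocompact G].

Definition leb := @lebesgue_measure R.

Definition ONB (e : nat -> R -> R[i]) : Prop :=
  [/\ (forall i, L2 leb (e i)),
      (forall i j, ip leb (e i) (e j) = if i == j then cR 1 else cR 0) &
      (forall f, L2 leb f -> (forall i, ip leb f (e i) = cR 0) ->
                 {ae leb, forall x, f x = cR 0})].

Definition escale (lam : R) (u : R -> R[i]) : R -> R[i] :=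
  fun x => cR (`|lam| `^ (4^-1)) * u (`|lam| `^ (2^-1) * x).

Definition rho (lam : R) (w : H) (u : R -> R[i]) : R -> R[i] :=
  match w with (p, q, t) =>
    fun x => cexp (lam * t) * cexp (lam * (p * x + 2^-1 * (p * q))) * u (x + q)
  end.

Definition Iset (d k : nat) : set R :=
  [set lam | (- (pi / ((2 : R) ^+ (2 * k + 1) * d%:R)) <= lam /\
              lam < - (pi / ((2 : R) ^+ (2 * k + 3) * d%:R))) \/
             (pi / ((2 : R) ^+ (2 * k + 3) * d%:R) < lam /\
              lam <= pi / ((2 : R) ^+ (2 * k + 1) * d%:R))].

(* tr( \hat S(lam) rho_lam(w)^* ) for lam in I^k, where
   \hat S(lam) = sum_{i=0}^{2^{2k}} e_i^{lam/2pi} (x) e_i^{lam/2pi} *)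
Definition trS (e : nat -> R -> R[i]) (k : nat) (lam : R) (w : H) : R[i] :=
  \sum_(i < (2 ^ (2 * k)).+1)
     ip leb (rho lam (hinv w) (escale (lam / (2 * pi)) (e i)))
            (escale (lam / (2 * pi)) (e i)).

(* Fourier inversion with Plancherel measure (2pi)^{-2} |lam| dlam:
   S(w) = sum_k \int_{I^k} tr(\hat S(lam) rho_lam(w)^* ) (2pi)^{-2}|lam| dlam *)
Definition Sfun (d : nat) (e : nat -> R -> R[i]) (w : H) : R[i] :=
  Complex
    (limn (fun n => \sum_(0 <= k < n) Rintegral leb (Iset d k)
        (fun lam => complex.Re (trS e k lam w) * (`|lam| / (2 * pi) ^+ 2))))
    (limn (fun n => \sum_(0 <= k < n) Rintegral leb (Iset d k)
        (fun lam => complex.Im (trS e k lam w) * (`|lam| / (2 * pi) ^+ 2)))).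

End Heisenberg.

(** The map [D_a h (w) = a^2 h (a . w)] is unitary on L^2(H): the dilation
    [w |-> a . w] scales Haar measure by [a^-4].  For [a = 2^j] it sends
    [V_0] onto [V_j], because [D_a (f * S_0) = (D_a f) * S_j], and it sends
    [L_gamma phi] to [phi_{j,gamma}].  The frame identity for [f] in [V_j]
    against the [phi_{j,gamma}] is therefore the frame identity for
    [D_a^-1 f] in [V_0] against the [L_gamma phi].  Neither the lattice
    property of [Gamma] nor the particular [S] matters for this transfer. *)

From mathcomp Require Import all_boot all_algebra.
From mathcomp Require Import all_classical all_reals all_analysis.
From mathcomp Require Import complex.
From mathcomp Require Import order measurable_realfun ring.
Import Order.TTheory GRing.Theory Num.Theory numFieldNormedType.Exports.
Import HBNNSimple.

Set Implicit Arguments.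
Unset Strict Implicit.
Unset Printing Implicit Defensive.

Local Open Scope classical_set_scope.
Local Open Scope ring_scope.

Section measure_scaling.
Local Open Scope ereal_scope.
Context d (T : measurableType d) (R : realType).
Implicit Types (mu : {measure set T -> \bar R}) (phi psi : T -> T) (c k : R).

Definition measure_scaling (mu : set T -> \bar R) phi c :=
  forall A, measurable A -> mu (phi @^-1` A) = c%:E * mu A.

Lemma gt0_muleBr (r : R) (y z : \bar R) :
  (0 < r)%R -> r%:E * (y - z) = r%:E * y - r%:E * z.
Proof.
move=> r0; case: y z => [y| |] [z| |] //=;
  rewrite ?gt0_muley ?gt0_muleNy ?lte_fin // -?EFinM -?EFinB ?mulrBr //.
Qed.

Lemma measure_scalingV mu phi psi c : (0 < c)%R ->
  measurable_fun setT psi -> cancel phi psi ->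
  measure_scaling mu phi c -> measure_scaling mu psi c^-1.
Proof.
move=> c0 mpsi phiK sc A mA.
have mpsiA : measurable (psi @^-1` A).
  by rewrite -[X in measurable X]setTI; apply: mpsi.
have -> : mu A = c%:E * mu (psi @^-1` A).
  by rewrite -sc //; congr (mu _); apply/funext => x; rewrite /preimage /= phiK.
by rewrite muleA -EFinM mulVf ?mul1e // lt0r_neq0.
Qed.

Lemma ge0_integral_measurable_comp_scaling mu phi c (F : T -> \bar R) :
  (0 < c)%R -> measurable_fun setT phi -> measure_scaling mu phi c ->
  measurable_fun [set: T] F -> (forall x, 0 <= F x) ->
  \int[mu]_x F (phi x) = c%:E * \int[mu]_x F x.
Proof.
move=> c0 mphi sc mF F0.
have := ge0_integral_pushforward mphi mu measurableT mF (fun y _ => F0 y).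
rewrite preimage_setT => <-.
pose cnn : {nonneg R} := NngNum (ltW c0).
rewrite (@eq_measure_integral _ _ _ _ (mscale cnn mu) (pushforward mu phi)).
  exact: ge0_integral_mscale.
by move=> A mA _; exact: sc.
Qed.

Lemma ge0_le_integralT mu (f g : T -> \bar R) : (forall x, 0 <= g x) ->
  (forall x, g x <= f x) -> \int[mu]_x g x <= \int[mu]_x f x.
Proof.
move=> g0 gf; rewrite ge0_integralTE // ge0_integralTE //; last first.
  by move=> x; exact: le_trans (g0 x) (gf x).
apply: ereal_sup_le => _ [h hg <-]; exists h => //= x.
exact: le_trans (hg x) (gf x).
Qed.

Lemma ge0_integralT_le_ub mu (f : T -> \bar R) (B : \bar R) :
  (forall x, 0 <= f x) ->
  (forall h : {nnsfun T >-> R},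
     (forall x, (h x)%:E <= f x) -> \int[mu]_x (h x)%:E <= B) ->
  \int[mu]_x f x <= B.
Proof.
move=> f0 hB; rewrite ge0_integralTE //.
apply: ge_ereal_sup => _ [h hf <-].
by have := hB h hf; rewrite integral_nnsfun // patch_setT.
Qed.

(* No measurability of [f] is assumed: the bound is checked on the simple
   functions below [k * f \o phi], which [psi] transports below [f]. *)
Lemma ge0_integral_comp_scaling_le mu phi psi c k (f : T -> \bar R) :
  (0 < c)%R -> (0 < k)%R ->
  measurable_fun setT phi -> measurable_fun setT psi ->
  cancel phi psi -> cancel psi phi -> measure_scaling mu phi c ->
  (forall x, 0 <= f x) ->
  \int[mu]_x (k%:E * f (phi x)) <= (k * c)%:E * \int[mu]_x f x.
Proof.
move=> c0 k0 mphi mpsi phiK psiK sc f0.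
apply: ge0_integralT_le_ub => [x|h hf]; first by rewrite mule_ge0 // lee_fin ltW.
have mhpsi : measurable_fun setT (fun y => (h (psi y))%:E).
  by apply/measurable_EFinP; apply: measurableT_comp.
have -> : \int[mu]_x (h x)%:E = c%:E * \int[mu]_x (h (psi x))%:E.
  rewrite -(ge0_integral_measurable_comp_scaling c0 mphi sc mhpsi) => [|x];
    last by rewrite lee_fin.
  by apply: eq_integral => x _; rewrite phiK.
have hpsi_le : \int[mu]_x (k^-1 * h (psi x))%:E <= \int[mu]_x f x.
  apply: ge0_le_integralT => x; first by rewrite lee_fin mulr_ge0 // invr_ge0 ltW.
  by have := hf (psi x); rewrite psiK EFinM lee_pdivrMl.
have -> : \int[mu]_x (h (psi x))%:E = k%:E * \int[mu]_x (k^-1 * h (psi x))%:E.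
  rewrite -ge0_integralZl_EFin //; last 3 first.
  - by move=> x _; rewrite lee_fin mulr_ge0 // invr_ge0 ltW.
  - by apply/measurable_EFinP; apply: measurable_funM => //; apply: measurableT_comp.
  - exact: ltW.
  by apply: eq_integral => x _; rewrite -EFinM mulrA mulfV ?mul1r // lt0r_neq0.
rewrite muleA -EFinM mulrC.
by apply: lee_wpmul2l => //; rewrite lee_fin mulr_ge0 // ltW.
Qed.

Lemma ge0_integral_comp_scaling mu phi psi c k (f : T -> \bar R) :
  (0 < c)%R -> (0 < k)%R ->
  measurable_fun setT phi -> measurable_fun setT psi ->
  cancel phi psi -> cancel psi phi -> measure_scaling mu phi c ->
  (forall x, 0 <= f x) ->
  \int[mu]_x (k%:E * f (phi x)) = (k * c)%:E * \int[mu]_x f x.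
Proof.
move=> c0 k0 mphi mpsi phiK psiK sc f0; apply/eqP; rewrite eq_le.
rewrite (ge0_integral_comp_scaling_le c0 k0 mphi mpsi phiK psiK sc f0) /=.
have kf0 x : 0 <= k%:E * f (phi x) by rewrite mule_ge0 // lee_fin ltW.
have := ge0_integral_comp_scaling_le (c := c^-1) (k := k^-1) _ _ mpsi mphi psiK
  phiK (measure_scalingV c0 mpsi phiK sc) kf0.
have -> : \int[mu]_x (k^-1%:E * (k%:E * f (phi (psi x)))) = \int[mu]_x f x.
  by apply: eq_integral => x _; rewrite psiK muleA -EFinM mulVf ?mul1e // lt0r_neq0.
rewrite -invfM mulrC lee_pdivlMl ?mulr_gt0 ?invr_gt0 //.
by apply; rewrite ?invr_gt0.
Qed.

Lemma integral_comp_scaling mu phi psi c k (f : T -> \bar R) :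
  (0 < c)%R -> (0 < k)%R ->
  measurable_fun setT phi -> measurable_fun setT psi ->
  cancel phi psi -> cancel psi phi -> measure_scaling mu phi c ->
  \int[mu]_x (k%:E * f (phi x)) = (k * c)%:E * \int[mu]_x f x.
Proof.
move=> c0 k0 mphi mpsi phiK psiK sc.
have k0E : 0 <= k%:E by rewrite lee_fin ltW.
rewrite integralE [in RHS]integralE.
have -> : (fun x => k%:E * f (phi x))^\+ = fun x => k%:E * f^\+ (phi x).
  by apply/funext => x; rewrite !funeposE maxe_pMr ?mule0.
have -> : (fun x => k%:E * f (phi x))^\- = fun x => k%:E * f^\- (phi x).
  by apply/funext => x; rewrite !funenegE -muleN maxe_pMr ?mule0.
rewrite (ge0_integral_comp_scaling c0 k0 mphi mpsi phiK psiK sc (funepos_ge0 f)).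
rewrite (ge0_integral_comp_scaling c0 k0 mphi mpsi phiK psiK sc (funeneg_ge0 f)).
by rewrite [RHS]gt0_muleBr ?mulr_gt0.
Qed.

Lemma Rintegral_comp_scaling mu phi psi c k (G : T -> R) :
  (0 < c)%R -> (0 < k)%R ->
  measurable_fun setT phi -> measurable_fun setT psi ->
  cancel phi psi -> cancel psi phi -> measure_scaling mu phi c ->
  Rintegral mu setT (fun x => k * G (phi x))%R = (k * c * Rintegral mu setT G)%R.
Proof.
move=> c0 k0 mphi mpsi phiK psiK sc; rewrite /Rintegral.
rewrite (integral_comp_scaling (fun x => (G x)%:E) c0 k0 mphi mpsi phiK psiK sc).
have kc : 0 < (k * c)%:E by rewrite lte_fin mulr_gt0.
by case: (\int[mu]_x (G x)%:E) => [r| |] //=; rewrite ?gt0_muley ?gt0_muleNy //= mulr0.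
Qed.

End measure_scaling.

Lemma measure_scaling_prod d1 d2 (T1 : measurableType d1)
    (T2 : measurableType d2) (R : realType)
    (m1 : {measure set T1 -> \bar R}) (m2 : {sigma_finite_measure set T2 -> \bar R})
    (f1 : T1 -> T1) (f2 : T2 -> T2) (c1 c2 : R) :
  0 < c1 -> 0 < c2 -> measurable_fun setT f1 ->
  measure_scaling m1 f1 c1 -> measure_scaling m2 f2 c2 ->
  measure_scaling (m1 \x m2)%E (fun x => (f1 x.1, f2 x.2)) (c1 * c2).
Proof.
move=> c10 c20 mf1 sc1 sc2 A mA; rewrite /product_measure1 /=.
have -> : (fun x => m2 (xsection ((fun x => (f1 x.1, f2 x.2)) @^-1` A) x)) =
          (fun x => c2%:E * (m2 \o xsection A) (f1 x))%E.
  apply/funext => x /=; rewrite -sc2; last exact: measurable_xsection.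
  by congr (m2 _); apply/seteqP; split => y; rewrite /xsection /preimage /= !in_setE.
have mA2 := measurable_fun_xsection m2 mA.
have mA2f1 : measurable_fun setT (fun x => (m2 \o xsection A) (f1 x)).
  exact: measurableT_comp.
rewrite (ge0_integralZl_EFin _ _ (fun x _ => measure_ge0 _ _) mA2f1) ?(ltW c20) //.
rewrite (ge0_integral_measurable_comp_scaling c10 mf1 sc1 mA2) //.
by rewrite muleA -EFinM mulrC.
Qed.

Lemma measure_scaling_lebesgue_mulr (R : realType) (k : R) : 0 < k ->
  measure_scaling (@lebesgue_measure R) ( *%R k) k^-1.
Proof.
move=> k0.
pose knn : {nonneg R} := NngNum (ltW k0).
pose f : measurableTypeR R -> measurableTypeR R := fun x => k * x.
have mf : measurable_fun setT f by exact: mulrl_measurable.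
have f_itv a b : f @^-1` `]a, b]%classic = `]a / k, b / k]%classic.
  by apply/seteqP; split => x /=; rewrite !in_itv /= ltr_pdivrMr // ler_pdivlMr // mulrC.
have := @lebesgue_measure_unique R (mscale knn (pushforward lebesgue_measure f)).
move=> /(_ mf) lebE B mB; rewrite [in RHS]lebE // => [|X [[a b] _ <-]].
  by rewrite /= muleA -EFinM mulVf ?mul1e // lt0r_neq0.
rewrite [RHS](_ : _ = k%:E * lebesgue_measure (f @^-1` `]a, b]%classic))%E //.
rewrite f_itv !lebesgue_measure_itv /= !lte_fin ltr_pM2r ?invr_gt0 //.
case: ifP => ab; last by rewrite mule0.
by rewrite -!EFinB -EFinM; congr EFin; field; exact: lt0r_neq0.
Qed.

Section real_scalar.
Variable R : realType.
Implicit Types (r s : R) (z : R[i]).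

Lemma cRM r s : cR (r * s) = cR r * cR s.
Proof. by rewrite /cR /=; congr Complex; rewrite ?mul0r ?mulr0 ?subr0 ?addr0. Qed.

Lemma Re_cRM r z : complex.Re (cR r * z) = r * complex.Re z.
Proof. by case: z => x y /=; rewrite mul0r subr0. Qed.

Lemma Im_cRM r z : complex.Im (cR r * z) = r * complex.Im z.
Proof. by case: z => x y /=; rewrite mul0r addr0. Qed.

Lemma cconj_cRM r z : cconj (cR r * z) = cR r * cconj z.
Proof.
by case: z => x y; rewrite /cconj /cR /=; congr Complex;
  rewrite ?mul0r ?subr0 ?addr0 ?mulrN.
Qed.

Lemma csq_cRM r z : csq (cR r * z) = r ^+ 2 * csq z.
Proof. by rewrite /csq Re_cRM Im_cRM !exprMn mulrDr. Qed.
End real_scalar.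

Section heisenberg_dilation.
Variable R : realType.
Implicit Types a b k : R.

Lemma hdilE a : hdil a = fun x : H R => (a * x.1.1, a * x.1.2, a ^+ 2 * x.2).
Proof. by apply/funext => -[[p q] t]. Qed.

Lemma measurable_hdil a : measurable_fun setT
  (@hdil R a : (measurableTypeR R * measurableTypeR R * measurableTypeR R)%type -> _).
Proof.
rewrite hdilE; apply: measurable_fun_pair; last first.
  exact: measurableT_comp (mulrl_measurable _) measurable_snd.
apply: measurable_fun_pair.
- exact: measurableT_comp (mulrl_measurable _)
    (measurableT_comp measurable_fst measurable_fst).
- exact: measurableT_comp (mulrl_measurable _)
    (measurableT_comp measurable_snd measurable_fst).
Qed.

Lemma hdilK a : 0 < a -> cancel (hdil a) (@hdil R a^-1).
Proof.
move=> a0 [[p q] t] /=; have an : a != 0 by exact: lt0r_neq0.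
by congr (_, _, _); field.
Qed.

Lemma hdilVK a : 0 < a -> cancel (hdil a^-1) (@hdil R a).
Proof. by move=> a0; have := @hdilK a^-1; rewrite invrK invr_gt0; apply. Qed.

Lemma hdil_hmul a (x y : H R) : hdil a (hmul x y) = hmul (hdil a x) (hdil a y).
Proof. by case: x y => [[? ?] ?] [[? ?] ?] /=; congr (_, _, _); ring. Qed.

Lemma hdil_hinv a (x : H R) : hdil a (hinv x) = hinv (hdil a x).
Proof. by case: x => [[? ?] ?] /=; congr (_, _, _); ring. Qed.

Lemma hdil_hdil a b (x : H R) : hdil a (hdil b x) = hdil (a * b) x.
Proof. by case: x => [[? ?] ?] /=; congr (_, _, _); ring. Qed.

(* The dilation [a . _] has Jacobian [a * a * a^2]. *)
Lemma measure_scaling_hdil a : 0 < a ->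
  measure_scaling (@hmu R) (hdil a) (a ^+ 4)^-1.
Proof.
move=> a0; rewrite hdilE.
have -> : (a ^+ 4)^-1 = (a^-1 * a^-1) * (a ^+ 2)^-1.
  by field; rewrite ?expf_neq0 // lt0r_neq0.
apply: (@measure_scaling_prod _ _ _ _ R
  (@lebesgue_measure R \x @lebesgue_measure R)%E (@lebesgue_measure R)
  (fun y => (a * y.1, a * y.2)) ( *%R (a ^+ 2)));
  rewrite ?mulr_gt0 ?invr_gt0 ?exprn_gt0 //.
- apply: measurable_fun_pair.
  + exact: measurableT_comp (mulrl_measurable _) measurable_fst.
  + exact: measurableT_comp (mulrl_measurable _) measurable_snd.
- apply: (@measure_scaling_prod _ _ _ _ R (@lebesgue_measure R)
    (@lebesgue_measure R) ( *%R a) ( *%R a)); rewrite ?invr_gt0 //;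
  exact: (measure_scaling_lebesgue_mulr a0).
- exact: (measure_scaling_lebesgue_mulr (exprn_gt0 2 a0)).
Qed.

Lemma integral_hdil a k (f : H R -> \bar R) : 0 < a -> 0 < k ->
  (\int[@hmu R]_x (k%:E * f (hdil a x)) = (k / a ^+ 4)%:E * \int[@hmu R]_x f x)%E.
Proof.
move=> a0 k0; have a4 : 0 < (a ^+ 4)^-1 by rewrite invr_gt0 exprn_gt0.
exact: (@integral_comp_scaling _ _ _ (@hmu R) _ _ _ _ f a4 k0 (measurable_hdil a)
  (measurable_hdil a^-1) (hdilK a0) (hdilVK a0) (measure_scaling_hdil a0)).
Qed.

Lemma Rintegral_hdil a k (g : H R -> R) : 0 < a -> 0 < k ->
  Rintegral (@hmu R) setT (fun x => k * g (hdil a x)) =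
  k / a ^+ 4 * Rintegral (@hmu R) setT g.
Proof.
move=> a0 k0; have a4 : 0 < (a ^+ 4)^-1 by rewrite invr_gt0 exprn_gt0.
exact: (@Rintegral_comp_scaling _ _ _ (@hmu R) _ _ _ _ g a4 k0 (measurable_hdil a)
  (measurable_hdil a^-1) (hdilK a0) (hdilVK a0) (measure_scaling_hdil a0)).
Qed.
End heisenberg_dilation.

Section unitary_dilation.
Variable R : realType.
Implicit Types (a b k : R) (F G : H R -> R[i]).

Lemma cint_hdil a k F : 0 < a -> 0 < k ->
  cint (@hmu R) (fun u => cR k * F (hdil a u)) = cR (k / a ^+ 4) * cint (@hmu R) F.
Proof.
move=> a0 k0; rewrite /cint.
under eq_fun do rewrite Re_cRM.
under [X in Complex _ (Rintegral _ _ X)]eq_fun do rewrite Im_cRM.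
rewrite (Rintegral_hdil (fun y => complex.Re (F y))) //.
rewrite (Rintegral_hdil (fun y => complex.Im (F y))) //.
by rewrite /cR /=; congr Complex; rewrite ?mul0r ?subr0 ?addr0.
Qed.

Definition hdilation a F : H R -> R[i] := fun w => cR (a ^+ 2) * F (hdil a w).

Lemma ip_hdilation a F G : 0 < a ->
  ip (@hmu R) (hdilation a F) (hdilation a G) = ip (@hmu R) F G.
Proof.
move=> a0; rewrite /ip /hdilation.
under eq_fun do rewrite cconj_cRM mulrACA -cRM -exprD.
rewrite (cint_hdil (fun y => F y * cconj (G y))) ?exprn_gt0 //.
by rewrite mulfV ?expf_neq0 ?lt0r_neq0 // mul1r.
Qed.

Lemma hdilationK a F : 0 < a -> hdilation a (hdilation a^-1 F) = F.
Proof.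
move=> a0; apply/funext => w; rewrite /hdilation hdilK // mulrA -cRM -exprMn.
by rewrite mulfV ?lt0r_neq0 // expr1n mul1r.
Qed.

Lemma L2_hdilation a F : 0 < a -> L2 (@hmu R) F -> L2 (@hmu R) (hdilation a F).
Proof.
move=> a0 [mRe mIm /integrableP[/measurable_EFinP mF2 F2_fin]].
have csqE x : csq (hdilation a F x) = a ^+ 4 * csq (F (hdil a x)).
  by rewrite csq_cRM -exprM.
split.
- under eq_fun do rewrite Re_cRM.
  by apply: measurable_funM => //; exact: measurableT_comp mRe (measurable_hdil a).
- under eq_fun do rewrite Im_cRM.
  by apply: measurable_funM => //; exact: measurableT_comp mIm (measurable_hdil a).
apply/integrableP; split; under eq_fun do rewrite csqE.
  apply/measurable_EFinP; apply: measurable_funM => //.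
  exact: measurableT_comp mF2 (measurable_hdil a).
under eq_fun do rewrite EFinM abseM gee0_abs ?lee_fin ?exprn_ge0 ?ltW //.
rewrite (integral_hdil (fun y => `|(csq (F y))%:E|%E)) ?exprn_gt0 //.
by rewrite mulfV ?expf_neq0 ?lt0r_neq0 // mul1e.
Qed.

Lemma hconv_hdilation (S F : H R -> R[i]) b (j j' : int) : 0 < b ->
  (2 : R) ^ j = b * (2 : R) ^ j' ->
  hdilation b (hconv F (Sdil S j')) = hconv (hdilation b F) (Sdil S j).
Proof.
move=> b0 bj; apply/funext => w; rewrite /hconv /hdilation /Sdil.
pose G v := F v * (cR (((2 : R) ^ j') ^+ 4) *
  S (hdil ((2 : R) ^ j') (hmul (hinv v) (hdil b w)))).
have -> : (fun u => cR (b ^+ 2) * F (hdil b u) *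
    (cR (((2 : R) ^ j) ^+ 4) * S (hdil ((2 : R) ^ j) (hmul (hinv u) w)))) =
    (fun u => cR (b ^+ 6) * G (hdil b u)).
  apply/funext => u; rewrite /G -hdil_hinv -hdil_hmul hdil_hdil bj [b * _]mulrC.
  by rewrite exprMn (_ : 6 = 2 + 4)%N // exprD !cRM; ring.
rewrite (cint_hdil G) ?exprn_gt0 //; congr (cR _ * _).
by field; rewrite ?expf_neq0 // lt0r_neq0.
Qed.

Lemma ae_hdil a (P Q : H R -> Prop) : 0 < a ->
  (forall w, P (hdil a w) -> Q w) ->
  {ae @hmu R, forall w, P w} -> {ae @hmu R, forall w, Q w}.
Proof.
move=> a0 PQ [N [mN N0 PN]]; exists (hdil a @^-1` N); split.
- by rewrite -[X in measurable X]setTI; apply: measurable_hdil.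
- by rewrite measure_scaling_hdil // N0 mule0.
- by move=> w /= nQw; apply: PN => /= Pw; apply/nQw/PQ.
Qed.

Lemma Vsp_hdilation (S F : H R -> R[i]) b (j j' : int) : 0 < b ->
  (2 : R) ^ j = b * (2 : R) ^ j' -> Vsp S j' F -> Vsp S j (hdilation b F).
Proof.
move=> b0 bj [LF [f [Lf Fconv]]]; split; first exact: L2_hdilation.
exists (hdilation b f); split; first exact: L2_hdilation.
apply: (ae_hdil (a := b)) Fconv => // w Fw.
by rewrite -(hconv_hdilation _ _ b0 bj) /hdilation Fw.
Qed.
End unitary_dilation.

Theorem mainTheorem4 (R : realType) (d : nat) (e : nat -> R -> R[i])
  (Gam : set (H R)) (phi : H R -> R[i]) :
  (0 < d)%N ->
  ONB e ->
  hlattice Gam ->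
  Vsp (Sfun d e) 0 phi ->
  NTF (Vsp (Sfun d e) 0) Gam (fun g => Ltr g phi) ->
  forall j : int, NTF (Vsp (Sfun d e) j) Gam (fun g => phijg j g phi).
Proof.
move=> _ _ _ _ [V0_Ltr frame0] j.
set S := Sfun d e; set a := (2 : R) ^ j.
have a0 : 0 < a by apply: exprz_gt0.
have phijgE g : phijg j g phi = hdilation a (Ltr g phi) by [].
have a_j0 : (2 : R) ^ j = a * (2 : R) ^ 0 by rewrite expr0z mulr1.
have a_0j : (2 : R) ^ 0 = a^-1 * (2 : R) ^ j by rewrite expr0z mulVf ?lt0r_neq0.
split=> [g Gg | f Vjf].
  by rewrite phijgE; apply: Vsp_hdilation a_j0 (V0_Ltr g Gg).
have V0f : Vsp S 0 (hdilation a^-1 f).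
  by apply: Vsp_hdilation a_0j Vjf; rewrite invr_gt0.
rewrite -(hdilationK f a0).
under eq_esum => g _ do rewrite phijgE (ip_hdilation _ _ a0).
by rewrite (ip_hdilation _ _ a0); exact: frame0.
Qed.
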